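(* Let $K$ be a field of characteristic $p>0$, $R=K[x_0,\dots,x_n]$, $\mathfrak{m}=(x_0,\dots,x_n)$, $q=p^e$ and $\mathfrak{m}^{[q]}=(x_0^q,\dots,x_n^q)$. Let $d$ be a positive integer. Then \[\mathfrak{m}^{[q]}:_R\mathfrak{m}^{(n+1)(d-2)+1}\subseteq\mathfrak{m}^{[q]}+\mathfrak{m}^{(n+1)(q-d+1)},\] where $\mathfrak{m}^i=R$ for $i\leqslant0$. *)

From HB Require Import structures.
From mathcomp Require Import all_boot all_algebra.
From mathcomp Require Import mpoly.
Set Implicit Arguments. Unset Strict Implicit. Unset Printing Implicit Defensive.
Import GRing.Theory Num.Theory.
Local Open Scope ring_scope.

Definition ideal_gen (K : fieldType) (n : nat) (S : {mpoly K[n]} -> Prop)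
  (f : {mpoly K[n]}) : Prop :=
  exists s : seq ({mpoly K[n]} * {mpoly K[n]}),
    (forall c, c \in s -> S c.2) /\ f = \sum_(c <- s) c.1 * c.2.

Definition frob_max (K : fieldType) (n q : nat) : {mpoly K[n]} -> Prop :=
  ideal_gen (fun g => exists i : 'I_n, g = 'X_i ^+ q).

Definition max_pow (K : fieldType) (n : nat) (i : int) : {mpoly K[n]} -> Prop :=
  if (i <= 0)%R then (fun _ => True)
  else ideal_gen (fun g => exists m : 'X_{1..n}, mdeg m = `|i|%N /\ g = 'X_[m]).

Definition ideal_add (K : fieldType) (n : nat) (I J : {mpoly K[n]} -> Prop)
  (f : {mpoly K[n]}) : Prop :=
  exists a b, I a /\ J b /\ f = a + b.

Definition ideal_colon (K : fieldType) (n : nat) (I J : {mpoly K[n]} -> Prop)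
  (f : {mpoly K[n]}) : Prop :=
  forall g, J g -> I (f * g).

From HB Require Import structures.
From mathcomp Require Import all_boot all_algebra.
From mathcomp Require Import mpoly.
From mathcomp Require Import zify.
Set Implicit Arguments.
Unset Strict Implicit.
Unset Printing Implicit Defensive.
Import GRing.Theory Num.Theory.
Local Open Scope ring_scope.

(* Both ideals are monomial, so it suffices to place every monomial x^a of f
   in one of them.  If some exponent a_i is at least q, then x^a lies in
   m^[q].  Otherwise let c_i = q - 1 - a_i; the monomial f x^c has coefficient
   f_a at x^(q-1,...,q-1), which no element of m^[q] has, so x^c is not in
   m^((n+1)(d-2)+1), i.e. deg c = (n+1)(q-1) - deg a <= (n+1)(d-2); this gives
   deg a >= (n+1)(q-d+1). *)

Lemma exists_submnm_mdeg (n : nat) (c : 'X_{1..n}) (k : nat) :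
  (k <= mdeg c)%N -> exists2 b : 'X_{1..n}, (b <= c)%MM & mdeg b = k.
Proof.
elim: k => [|k IHk] hk.
  by exists 0%MM; [apply/mnm_lepP => i; rewrite mnm0E | rewrite mdeg0].
have [b hbc db] := IHk (ltnW hk).
have [i hi] : exists i, (b i < c i)%N.
  apply/existsP; apply: contraTT hk; rewrite negb_exists => /forallP hcb.
  rewrite -ltnNge ltnS -db !mdegE; apply: leq_sum => j _.
  by rewrite leqNgt hcb.
exists (b + U_(i))%MM; last by rewrite mdegD mdeg1 db addn1.
apply/mnm_lepP => j; rewrite mnmDE mnm1E.
by case: eqVneq => [<-|_]; rewrite ?addn1 ?addn0 //; apply/mnm_lepP.
Qed.

Section IdealGen.
Variables (K : fieldType) (n : nat) (S : {mpoly K[n]} -> Prop).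

Lemma ideal_gen0 : ideal_gen S 0.
Proof. by exists [::]; rewrite big_nil. Qed.

Lemma ideal_genD g h : ideal_gen S g -> ideal_gen S h -> ideal_gen S (g + h).
Proof.
move=> [s [hs ->]] [t [ht ->]]; exists (s ++ t); split; last by rewrite big_cat.
by move=> c; rewrite mem_cat => /orP [/hs | /ht].
Qed.

Lemma ideal_genMl c g : ideal_gen S g -> ideal_gen S (c * g).
Proof.
move=> [s [hs ->]]; exists [seq (c * x.1, x.2) | x <- s]; split.
  by move=> x /mapP [y /hs hy ->].
by rewrite big_map mulr_sumr; apply: eq_bigr => x _; rewrite mulrA.
Qed.

Lemma ideal_genZ (a : K) g : ideal_gen S g -> ideal_gen S (a *: g).
Proof. by rewrite -mul_mpolyC; apply: ideal_genMl. Qed.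

Lemma ideal_gen_mem g : S g -> ideal_gen S g.
Proof.
move=> Sg; exists [:: (1, g)]; rewrite big_seq1 mul1r.
by split => // c /[1!inE] /eqP ->.
Qed.

End IdealGen.

Section MaxPow.
Variables (K : fieldType) (n : nat) (i : int).

Lemma max_pow0 : @max_pow K n i 0.
Proof. by rewrite /max_pow; case: ifP => // _; apply: ideal_gen0. Qed.

Lemma max_powD g h : max_pow i g -> max_pow i h -> @max_pow K n i (g + h).
Proof. by rewrite /max_pow; case: ifP => // _; apply: ideal_genD. Qed.

Lemma max_powZ (a : K) g : max_pow i g -> @max_pow K n i (a *: g).
Proof. by rewrite /max_pow; case: ifP => // _; apply: ideal_genZ. Qed.

Lemma max_pow_mpolyX (m : 'X_{1..n}) : i <= (mdeg m)%:Z -> @max_pow K n i 'X_[m].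
Proof.
rewrite /max_pow; case: ifP => // /negbT i_gt0 lim.
have [b hbm db] := @exists_submnm_mdeg _ m `|i|%N ltac:(lia).
rewrite -(submK hbm) mpolyXD; apply: ideal_genMl; apply: ideal_gen_mem.
by exists b.
Qed.

End MaxPow.

Section FrobMax.
Variables (K : fieldType) (n q : nat).

Lemma frob_max_mpolyX (m : 'X_{1..n}) (i : 'I_n) :
  (q <= m i)%N -> @frob_max K n q 'X_[m].
Proof.
move=> qlemi; have hqm : (U_(i) *+ q <= m)%MM.
  apply/mnm_lepP => j; rewrite mulmnE mnm1E.
  by case: eqVneq => [<-|]; rewrite ?mul1n ?mul0n.
rewrite -(submK hqm) mpolyXD -mpolyXn; apply: ideal_genMl; apply: ideal_gen_mem.
by exists i.
Qed.

Lemma frob_max_mcoeff (h : {mpoly K[n]}) (m : 'X_{1..n}) :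
  frob_max q h -> (forall i, m i < q)%N -> h@_m = 0.
Proof.
move=> [s [hs ->]] hm; rewrite raddf_sum /= big_seq; apply: big1 => c /hs [i ->].
apply/memN_msupp_eq0; rewrite mpolyXn (perm_mem (msuppMX _ _)).
apply/negP => /mapP [m' _ em]; move: (hm i).
by rewrite em mnmDE mulmnE mnm1E eqxx mul1n ltnNge leq_addr.
Qed.

Lemma colon_frob_max_msupp (k : int) (f : {mpoly K[n]}) (a : 'X_{1..n}) :
  ideal_colon (frob_max q) (max_pow k) f -> a \in msupp f ->
  (forall i, a i < q)%N -> (n * q.-1)%:Z < (mdeg a)%:Z + k.
Proof.
move=> fcolon af alt; case: ltrP => // hk.
pose c : 'X_{1..n} := [multinom (q.-1 - a i)%N | i < n].
have dc : (mdeg c + mdeg a = n * q.-1)%N.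
  rewrite !mdegE -big_split /= (eq_bigr (fun _ => q.-1)) ?sum_nat_const ?card_ord //.
  by move=> i _; rewrite mnmE subnK //; have := alt i; lia.
have ca_lt : forall i, ((c + a)%MM i < q)%N.
  by move=> i; rewrite mnmDE mnmE; have := alt i; lia.
have kc : k <= (mdeg c)%:Z by lia.
have := frob_max_mcoeff (fcolon _ (max_pow_mpolyX K kc)) ca_lt.
by rewrite mcoeffMX => fa0; move: af; rewrite mcoeff_msupp fa0 eqxx.
Qed.

End FrobMax.

Section IdealAddMsupp.
Variables (K : fieldType) (n : nat) (I J : {mpoly K[n]} -> Prop).
Hypotheses (I0 : I 0) (ID : forall g h, I g -> I h -> I (g + h))
  (IZ : forall (a : K) g, I g -> I (a *: g)).
Hypotheses (J0 : J 0) (JD : forall g h, J g -> J h -> J (g + h))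
  (JZ : forall (a : K) g, J g -> J (a *: g)).

Lemma ideal_add_msupp (f : {mpoly K[n]}) :
  (forall m, m \in msupp f -> I 'X_[m] \/ J 'X_[m]) -> ideal_add I J f.
Proof.
rewrite [f in ideal_add _ _ f]mpolyE; elim: (msupp f) => [|m s IHs] hs.
  by exists 0, 0; rewrite big_nil addr0.
rewrite big_cons.
have [g [h [Ig [Jh ->]]]] : ideal_add I J (\sum_(m' <- s) f@_m' *: 'X_[m']).
  by apply: IHs => m' ms; apply: hs; rewrite inE ms orbT.
case: (hs m (mem_head _ _)) => [/(IZ f@_m) Im | /(JZ f@_m) Jm].
  by exists (f@_m *: 'X_[m] + g), h; rewrite addrA; split; [apply: ID | split].
by exists g, (f@_m *: 'X_[m] + h); rewrite addrCA; split; [| split; [apply: JD |]].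
Qed.

End IdealAddMsupp.

Theorem lemma3p2 (K : fieldType) (p : nat) (hp : prime p) (hchar : p \in [pchar K])
  (n e d : nat) (hd : (0 < d)%N) :
  forall f : {mpoly K[n.+1]},
    ideal_colon (@frob_max K n.+1 (p ^ e))
                (@max_pow K n.+1 ((n.+1)%:Z * (d%:Z - 2) + 1)) f ->
    ideal_add (@frob_max K n.+1 (p ^ e))
              (@max_pow K n.+1 ((n.+1)%:Z * ((p ^ e)%:Z - d%:Z + 1))) f.
Proof.
move=> f; have : (0 < p ^ e)%N by rewrite expn_gt0 prime_gt0.
move: (p ^ e)%N => q q_gt0 fcolon.
apply: ideal_add_msupp => [||||||a af].
- exact: ideal_gen0.
- exact: ideal_genD.
- exact: ideal_genZ.
- exact: max_pow0.
- exact: max_powD.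
- exact: max_powZ.
have [/existsP [i qle] | alt] := boolP [exists i, (q <= a i)%N].
  by left; apply: frob_max_mpolyX qle.
right; apply: max_pow_mpolyX.
have /(colon_frob_max_msupp fcolon af) : forall i, (a i < q)%N.
  by move=> i; rewrite ltnNge; apply: contraNN alt => qle; apply/existsP; exists i.
nia.
Qed.
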